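(* Every real planar quadratic differential system having a finite semi-elemental double saddle-node $\overline{sn}_{(2)}$ and an infinite saddle-node of type $\overline{\binom{0}{2}}SN$ located at the point at infinity in the direction defined by the eigenvector of the saddle-node with null eigenvalue can be brought, via an affine change of coordinates and a time rescaling, to the normal form $$\dot x = x^2+2hxy+ky^2,\qquad \dot y = y+xy+ny^2,$$ where $h,k,n$ are real parameters.
   Context: A singular point $r$ of a planar vector field $X$ is semi-elemental if $\det DX(r)=0$ but $\operatorname{tr} DX(r)\neq 0$. A finite double saddle-node $\overline{sn}_{(2)}$ is a semi-elemental finite singular point of multiplicity two whose neighborhood consists of two hyperbolic sectors and one parabolic sector. Infinite singular points are those of the Poincaré compactification on the line at infinity; e.g. in the chart $x=1/z$, $y=u/z$ the line at infinity is $z=0$ and the point at infinity in the direction of the $x$-axis is $(u,z)=(0,0)$. An infinite singular point is a saddle-node of type $\overline{\binom{0}{2}}SN$ if it is a semi-elemental saddle-node of multiplicity two on the line at infinity, formed by the collision of an infinite saddle with an infinite node, i.e. its eigendirection with zero eigenvalue is the line at infinity. *)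

From HB Require Import structures.
From mathcomp Require Import all_boot all_order all_algebra.
From mathcomp Require Import mpoly.
Set Implicit Arguments. Unset Strict Implicit. Unset Printing Implicit Defensive.
Import Order.TTheory GRing.Theory Num.Theory.
Local Open Scope ring_scope.

Section Defs.
Variable R : realFieldType.

Definition i0 : 'I_2 := ord0.
Definition i1 : 'I_2 := ord_max.

Definition vfield := 'I_2 -> {mpoly R[2]}.
Definition mkvf (P Q : {mpoly R[2]}) : vfield :=
  fun i => if i == i0 then P else Q.

Definition evp (p : {mpoly R[2]}) (x : 'cV[R]_2) : R := p.@[fun j => x j 0].
Definition evf (F : vfield) (x : 'cV[R]_2) : 'cV[R]_2 := \col_i evp (F i) x.
Definition pt2 (a b : R) : 'cV[R]_2 := \col_i (if i == i0 then a else b).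

(* real planar quadratic system: max(deg P, deg Q) = 2 (msize = degree + 1) *)
Definition quadratic_system (P Q : {mpoly R[2]}) : Prop :=
  maxn (msize P) (msize Q) = 3%N.

Definition singular_point (F : vfield) (r : 'cV[R]_2) : Prop := evf F r = 0.

Definition jac (F : vfield) (r : 'cV[R]_2) : 'M[R]_2 :=
  \matrix_(i, j) evp ((F i)^`M(j)) r.

Definition semi_elemental (F : vfield) (r : 'cV[R]_2) : Prop :=
  singular_point F r /\ \det (jac F r) = 0 /\ \tr (jac F r) != 0.

Definition null_eigvec (F : vfield) (r : 'cV[R]_2) (v : 'cV[R]_2) : Prop :=
  v != 0 /\ jac F r *m v = 0.

Definition second_order_term (F : vfield) (r w v : 'cV[R]_2) : R :=
  \sum_(i < 2) w i 0 * \sum_(j < 2) \sum_(k < 2)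
       evp (((F i)^`M(j))^`M(k)) r * v j 0 * v k 0.

(* semi-elemental singular point of multiplicity exactly two: along the
   (one-dimensional) centre direction v, projected on the left null vector w,
   the quadratic term does not vanish.  By the theorem on semi-elemental
   points (Andronov; Dumortier-Llibre-Artes Thm 2.19) such a point is a
   saddle-node (two hyperbolic sectors, one parabolic sector). *)
Definition semi_elemental_mult2 (F : vfield) (r : 'cV[R]_2) : Prop :=
  semi_elemental F r /\
  exists v w : 'cV[R]_2, null_eigvec F r v /\ w != 0 /\
    w^T *m jac F r = 0 /\ second_order_term F r w v != 0.

Definition finite_double_saddle_node (F : vfield) (r : 'cV[R]_2) : Prop :=
  semi_elemental_mult2 F r.

(* chart U1: x = 1/z, y = u/z; variables (u, z) = ('X_0, 'X_1).
   homU1 p = z^2 p(1/z, u/z) *)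
Definition homU1 (p : {mpoly R[2]}) : {mpoly R[2]} :=
  \sum_(m <- msupp p)
     p@_m *: ('X_i0 ^+ (m i1) * 'X_i1 ^+ (2 - (m i0 + m i1))).
(* chart U2: x = v/z, y = 1/z; variables (v, z) = ('X_0, 'X_1).
   homU2 p = z^2 p(v/z, 1/z) *)
Definition homU2 (p : {mpoly R[2]}) : {mpoly R[2]} :=
  \sum_(m <- msupp p)
     p@_m *: ('X_i0 ^+ (m i0) * 'X_i1 ^+ (2 - (m i0 + m i1))).

(* U1:  u' = z^2 (Q - uP)(1/z,u/z),  z' = - z^3 P(1/z,u/z) *)
Definition chartU1 (P Q : {mpoly R[2]}) : vfield :=
  mkvf (homU1 Q - 'X_i0 * homU1 P) (- ('X_i1 * homU1 P)).
(* U2:  v' = z^2 (P - vQ)(v/z,1/z),  z' = - z^3 Q(v/z,1/z) *)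
Definition chartU2 (P Q : {mpoly R[2]}) : vfield :=
  mkvf (homU2 P - 'X_i0 * homU2 Q) (- ('X_i1 * homU2 Q)).

(* the point at infinity in the direction of the nonzero vector v,
   given as (local chart field, point in that chart) *)
Definition infinite_point_in_direction (P Q : {mpoly R[2]}) (v : 'cV[R]_2)
  : vfield * 'cV[R]_2 :=
  if v i0 0 != 0 then (chartU1 P Q, pt2 (v i1 0 / v i0 0) 0)
  else (chartU2 P Q, pt2 0 0).

Definition infinite_saddle_node_02 (G : vfield) (p : 'cV[R]_2) : Prop :=
  p i1 0 = 0 /\ semi_elemental_mult2 G p /\
  (forall v, null_eigvec G p v -> v i1 0 = 0).

Definition normal_form (h k n : R) : vfield :=
  mkvf ('X_i0 ^+ 2 + (2 * h) *: ('X_i0 * 'X_i1) + k *: 'X_i1 ^+ 2)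
       ('X_i1 + 'X_i0 * 'X_i1 + n *: 'X_i1 ^+ 2).

End Defs.

From HB Require Import structures.
From mathcomp Require Import all_boot all_order all_algebra.
From mathcomp Require Import mpoly.
From mathcomp Require Import ring.
Import Order.TTheory GRing.Theory Num.Theory.
Local Open Scope ring_scope.
Set Implicit Arguments. Unset Strict Implicit. Unset Printing Implicit Defensive.

(* Translate the finite saddle-node r to the origin.  Its Jacobian J has rank one and
   trace tr <> 0; let v span ker J and w the left kernel, so that w.v <> 0.  The
   coordinates z0 ~ w.y and z1 ~ v0 y1 - v1 y0 make J = diag(0, tr), and dividing time
   by tr normalises the linear part.  Multiplicity two means mu = w.q(v) <> 0 for the
   quadratic part q; this lets us rescale z0 so that x^2 has coefficient 1 in x'.  The
   point at infinity in direction v is singular iff v0 q2(v) - v1 q1(v) = 0, which kills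
   the x^2 term of y', and the vanishing of the determinant there forces the coefficient
   of xy in y' to be 1 as well. *)

Section QuadraticForms.
Variable R : idomainType.
Implicit Types a b c x y : R.

Definition qform a b c x y : R := a * x * x + b * x * y + c * y * y.

Definition qpolar a b c x y x' y' : R :=
  2 * a * x * x' + b * (x * y' + y * x') + 2 * c * y * y'.

Lemma qform_combination a b c s0 s1 p0 p1 z0 z1 :
  qform a b c (z0 * s0 + z1 * p0) (z0 * s1 + z1 * p1) =
  z0 ^+ 2 * qform a b c s0 s1 + z0 * z1 * qpolar a b c s0 s1 p0 p1
  + z1 ^+ 2 * qform a b c p0 p1.
Proof. by rewrite /qform /qpolar; ring. Qed.

Lemma qform_lincomb a1 b1 c1 a2 b2 c2 w0 w1 x y :
  w0 * qform a1 b1 c1 x y + w1 * qform a2 b2 c2 x y =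
  qform (w0 * a1 + w1 * a2) (w0 * b1 + w1 * b2) (w0 * c1 + w1 * c2) x y.
Proof. by rewrite /qform; ring. Qed.

Lemma qform_eq0_parallel a b c v0 v1 u0 u1 :
  (v0 != 0) || (v1 != 0) -> v0 * u1 = v1 * u0 ->
  qform a b c v0 v1 = 0 -> qform a b c u0 u1 = 0.
Proof.
move=> v_neq0 par qv0; apply/eqP.
have e0 : v0 ^+ 2 * qform a b c u0 u1 = 0.
  transitivity (qform a b c (v0 * u0) (v0 * u1)); first by rewrite /qform; ring.
  by rewrite par; transitivity (u0 ^+ 2 * qform a b c v0 v1);
    [rewrite /qform; ring | rewrite qv0 mulr0].
have e1 : v1 ^+ 2 * qform a b c u0 u1 = 0.
  transitivity (qform a b c (v1 * u0) (v1 * u1)); first by rewrite /qform; ring.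
  by rewrite -par; transitivity (u1 ^+ 2 * qform a b c v0 v1);
    [rewrite /qform; ring | rewrite qv0 mulr0].
by case/orP: v_neq0 => vi_neq0; [move/eqP: e0 | move/eqP: e1];
  rewrite mulf_eq0 expf_eq0 (negbTE vi_neq0) andbF.
Qed.

End QuadraticForms.

Section PlanarGerm.
Variable R : numFieldType.
Variables (j11 j12 j21 j22 : R).
Local Notation tr := (j11 + j22).

Lemma right_kernel_cross v0 v1 y0 y1 :
  j11 * v0 + j12 * v1 = 0 -> j21 * v0 + j22 * v1 = 0 ->
  v0 * (j21 * y0 + j22 * y1) - v1 * (j11 * y0 + j12 * y1) = tr * (v0 * y1 - v1 * y0).
Proof.
move=> Jv0 Jv1; transitivity (tr * (v0 * y1 - v1 * y0)
  + y0 * (j21 * v0 + j22 * v1) - y1 * (j11 * v0 + j12 * v1)); first by ring.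
by rewrite Jv0 Jv1; ring.
Qed.

Lemma left_kernel_dot w0 w1 y0 y1 :
  w0 * j11 + w1 * j21 = 0 -> w0 * j12 + w1 * j22 = 0 ->
  w0 * (j11 * y0 + j12 * y1) + w1 * (j21 * y0 + j22 * y1) = 0.
Proof.
move=> wJ0 wJ1; transitivity (y0 * (w0 * j11 + w1 * j21) + y1 * (w0 * j12 + w1 * j22)).
  by ring.
by rewrite wJ0 wJ1; ring.
Qed.

Lemma right_kernel_parallel v0 v1 u0 u1 : tr != 0 ->
  j11 * v0 + j12 * v1 = 0 -> j21 * v0 + j22 * v1 = 0 ->
  j11 * u0 + j12 * u1 = 0 -> j21 * u0 + j22 * u1 = 0 ->
  v0 * u1 = v1 * u0.
Proof.
move=> tr_neq0 Jv0 Jv1 Ju0 Ju1; apply/eqP; rewrite -subr_eq0.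
have := right_kernel_cross u0 u1 Jv0 Jv1; rewrite Ju0 Ju1 !mulr0 subrr.
by move/esym/eqP; rewrite mulf_eq0 (negbTE tr_neq0).
Qed.

Lemma left_right_kernel_dot_neq0 v0 v1 w0 w1 : tr != 0 ->
  (v0 != 0) || (v1 != 0) -> j11 * v0 + j12 * v1 = 0 -> j21 * v0 + j22 * v1 = 0 ->
  (w0 != 0) || (w1 != 0) -> w0 * j11 + w1 * j21 = 0 -> w0 * j12 + w1 * j22 = 0 ->
  w0 * v0 + w1 * v1 != 0.
Proof.
move=> tr_neq0 v_neq0 Jv0 Jv1 w_neq0 wJ0 wJ1; apply/negP => /eqP dot0.
(* [tr * v_i * w_j] is a combination of [J v], [w^T J] and [w . v]. *)
have e00 : tr * (v0 * w0) = 0.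
  transitivity (w0 * (j11 * v0 + j12 * v1) + j22 * (w0 * v0 + w1 * v1)
    - v1 * (w0 * j12 + w1 * j22)); first by ring.
  by rewrite Jv0 wJ1 dot0; ring.
have e01 : tr * (v0 * w1) = 0.
  transitivity (w1 * (j11 * v0 + j12 * v1) + v0 * (w0 * j12 + w1 * j22)
    - j12 * (w0 * v0 + w1 * v1)); first by ring.
  by rewrite Jv0 wJ1 dot0; ring.
have e10 : tr * (v1 * w0) = 0.
  transitivity (w0 * (j21 * v0 + j22 * v1) + v1 * (w0 * j11 + w1 * j21)
    - j21 * (w0 * v0 + w1 * v1)); first by ring.
  by rewrite Jv1 wJ0 dot0; ring.
have e11 : tr * (v1 * w1) = 0.
  transitivity (j11 * (w0 * v0 + w1 * v1) + w1 * (j21 * v0 + j22 * v1)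
    - v0 * (w0 * j11 + w1 * j21)); first by ring.
  by rewrite Jv1 wJ0 dot0; ring.
move: e00 e01 e10 e11 => /eqP + /eqP + /eqP + /eqP.
rewrite !mulf_eq0 (negbTE tr_neq0) /=.
by case/orP: v_neq0 => /negbTE ->; case/orP: w_neq0 => /negbTE ->; rewrite ?orbF.
Qed.

Variables (a1 b1 c1 a2 b2 c2 v0 v1 w0 w1 : R).
Local Notation f1 y0 y1 := (j11 * y0 + j12 * y1 + qform a1 b1 c1 y0 y1).
Local Notation f2 y0 y1 := (j21 * y0 + j22 * y1 + qform a2 b2 c2 y0 y1).
Local Notation q1v := (qform a1 b1 c1 v0 v1).
Local Notation q2v := (qform a2 b2 c2 v0 v1).
Local Notation p1 := (qpolar a1 b1 c1 v0 v1 (- w1) w0).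
Local Notation p2 := (qpolar a2 b2 c2 v0 v1 (- w1) w0).
Local Notation q1w := (qform a1 b1 c1 (- w1) w0).
Local Notation q2w := (qform a2 b2 c2 (- w1) w0).

Local Notation om := (w0 * v0 + w1 * v1).
Local Notation mu := (w0 * q1v + w1 * q2v).
Local Notation s := (tr * om / mu).

(* [y = (z0 * s) v + z1 (- w1, w0)] defines the new coordinates [z], and [(a_ij)] is
   the matrix of [y |-> z]. *)
Lemma quadratic_germ_normal_form :
  tr != 0 ->
  (v0 != 0) || (v1 != 0) -> j11 * v0 + j12 * v1 = 0 -> j21 * v0 + j22 * v1 = 0 ->
  (w0 != 0) || (w1 != 0) -> w0 * j11 + w1 * j21 = 0 -> w0 * j12 + w1 * j22 = 0 ->
  mu != 0 -> v0 * q2v - v1 * q1v = 0 -> v0 * p2 - v1 * p1 = mu ->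
  exists a11 a12 a21 a22 c h k n : R,
    a11 * a22 - a12 * a21 != 0 /\ c != 0 /\
    forall y0 y1 : R,
      c * (a11 * f1 y0 y1 + a12 * f2 y0 y1) =
        qform 1 (2 * h) k (a11 * y0 + a12 * y1) (a21 * y0 + a22 * y1) /\
      c * (a21 * f1 y0 y1 + a22 * f2 y0 y1) =
        (a21 * y0 + a22 * y1) + qform 0 1 n (a11 * y0 + a12 * y1) (a21 * y0 + a22 * y1).
Proof.
move=> tr_neq0 v_neq0 Jv0 Jv1 w_neq0 wJ0 wJ1 mu_neq0 inf_sing inf_det.
have om_neq0 := left_right_kernel_dot_neq0 tr_neq0 v_neq0 Jv0 Jv1 w_neq0 wJ0 wJ1.
have two_neq0 : 2 != 0 :> R by rewrite pnatr_eq0.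
have nz := (om_neq0, tr_neq0, mu_neq0, two_neq0).
exists (w0 / (s * om)), (w1 / (s * om)), (- v1 / om), (v0 / om), tr^-1,
  ((w0 * p1 + w1 * p2) / (2 * (tr * om))), ((w0 * q1w + w1 * q2w) / (s * tr * om)),
  ((v0 * q2w - v1 * q1w) / (tr * om)).
split.
  have -> : w0 / (s * om) * (v0 / om) - w1 / (s * om) * (- v1 / om) = (s * om)^-1.
    by field; rewrite ?nz.
  by rewrite invr_neq0 ?mulf_neq0 ?invr_neq0.
split; first by rewrite invr_neq0.
move=> y0 y1.
have [z0 [z1 [-> ->]]] : exists z0 z1, y0 = z0 * s * v0 + z1 * - w1 /\
    y1 = z0 * s * v1 + z1 * w0.
  exists ((w0 * y0 + w1 * y1) / (s * om)), ((v0 * y1 - v1 * y0) / om).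
  by split; field; rewrite ?nz.
have -> : w0 / (s * om) * (z0 * s * v0 + z1 * - w1) + w1 / (s * om) * (z0 * s * v1 + z1 * w0)
    = z0 by field; rewrite ?nz.
have -> : - v1 / om * (z0 * s * v0 + z1 * - w1) + v0 / om * (z0 * s * v1 + z1 * w0)
    = z1 by field; rewrite ?nz.
have qE a b c : qform a b c (z0 * s * v0 + z1 * - w1) (z0 * s * v1 + z1 * w0) =
    (z0 * s) ^+ 2 * qform a b c v0 v1 + z0 * s * z1 * qpolar a b c v0 v1 (- w1) w0
    + z1 ^+ 2 * qform a b c (- w1) w0.
  by rewrite qform_combination.
have lin_dot := left_kernel_dot (z0 * s * v0 + z1 * - w1) (z0 * s * v1 + z1 * w0) wJ0 wJ1.
have lin_cross := right_kernel_cross (z0 * s * v0 + z1 * - w1) (z0 * s * v1 + z1 * w0) Jv0 Jv1.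
split.
  transitivity (tr^-1 / (s * om) * (0 + (z0 * s) ^+ 2 * mu
     + z0 * s * z1 * (w0 * p1 + w1 * p2) + z1 ^+ 2 * (w0 * q1w + w1 * q2w))).
    by rewrite -lin_dot !qE; ring.
  by rewrite /qform; field; rewrite ?nz.
transitivity (tr^-1 / om * (tr * (om * z1) + (z0 * s) ^+ 2 * (v0 * q2v - v1 * q1v)
   + z0 * s * z1 * (v0 * p2 - v1 * p1) + z1 ^+ 2 * (v0 * q2w - v1 * q1w))).
  have -> : om * z1 = v0 * (z0 * s * v1 + z1 * w0) - v1 * (z0 * s * v0 + z1 * - w1) by ring.
  by rewrite -lin_cross !qE; field; rewrite ?nz.
by rewrite inf_sing inf_det /qform; field; rewrite ?nz.
Qed.

End PlanarGerm.

Section InfiniteSaddleNode.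
Variable R : numFieldType.
Variables (a1 b1 c1 a2 b2 c2 v0 v1 w0 w1 : R).
Local Notation q1v := (qform a1 b1 c1 v0 v1).
Local Notation q2v := (qform a2 b2 c2 v0 v1).
Local Notation mu := (w0 * q1v + w1 * q2v).
Local Notation p1 := (qpolar a1 b1 c1 v0 v1 (- w1) w0).
Local Notation p2 := (qpolar a2 b2 c2 v0 v1 (- w1) w0).

Lemma infinite_conditions_U1 : v0 != 0 ->
  let u := v1 / v0 in
  qform a2 b2 c2 1 u - u * qform a1 b1 c1 1 u = 0 ->
  (b2 + 2 * c2 * u - qform a1 b1 c1 1 u - u * (b1 + 2 * c1 * u)) * - qform a1 b1 c1 1 u = 0 ->
  mu != 0 ->
  v0 * q2v - v1 * q1v = 0 /\ v0 * p2 - v1 * p1 = mu.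
Proof.
move=> v0_neq0 u sing det mu_neq0.
have dehomog a b c : qform a b c v0 v1 = v0 ^+ 2 * qform a b c 1 u.
  by rewrite /u /qform; field.
have inv_dir : v0 * q2v - v1 * q1v = 0.
  transitivity (v0 ^+ 3 * (qform a2 b2 c2 1 u - u * qform a1 b1 c1 1 u)).
    by rewrite !dehomog /u; field.
  by rewrite sing mulr0.
split=> //.
have q1u_neq0 : qform a1 b1 c1 1 u != 0.
  apply: contra_neq mu_neq0 => q1u0.
  have q1v0 : q1v = 0 by rewrite dehomog q1u0 mulr0.
  have : v0 * q2v = 0 by rewrite -inv_dir q1v0 mulr0 subr0.
  by move/eqP; rewrite mulf_eq0 (negbTE v0_neq0) q1v0 => /eqP->; rewrite !mulr0 addr0.
have D0 : v0 ^+ 2 * (b2 + 2 * c2 * u - qform a1 b1 c1 1 u - u * (b1 + 2 * c1 * u)) = 0.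
  by move/eqP: det; rewrite mulf_eq0 oppr_eq0 (negbTE q1u_neq0) orbF => /eqP->; rewrite mulr0.
apply: (mulfI v0_neq0); apply/eqP; rewrite -subr_eq0; apply/eqP.
transitivity ((v0 * w0 + v1 * w1) * (v0 ^+ 2 * (b2 + 2 * c2 * u - qform a1 b1 c1 1 u
  - u * (b1 + 2 * c1 * u))) - 3 * w1 * (v0 * q2v - v1 * q1v)).
  by rewrite /u /qform /qpolar; field.
by rewrite D0 inv_dir; ring.
Qed.

Lemma infinite_conditions_U2 : v0 = 0 -> v1 != 0 ->
  qform a1 b1 c1 0 1 = 0 -> (b1 - c2) * - qform a2 b2 c2 0 1 = 0 -> mu != 0 ->
  v0 * q2v - v1 * q1v = 0 /\ v0 * p2 - v1 * p1 = mu.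
Proof.
move=> -> v1_neq0 sing det mu_neq0.
have c1_0 : c1 = 0 by rewrite -sing /qform; ring.
have q2E : qform a2 b2 c2 0 1 = c2 by rewrite /qform; ring.
rewrite q2E in det.
split; first by rewrite /qform c1_0; ring.
have c2_neq0 : c2 != 0.
  by apply: contra_neq mu_neq0 => c2_0; rewrite /qform c1_0 c2_0; ring.
have b1_c2 : b1 = c2.
  by move/eqP: det; rewrite mulf_eq0 oppr_eq0 (negbTE c2_neq0) orbF subr_eq0 => /eqP.
by rewrite /qform /qpolar b1_c2 c1_0; ring.
Qed.

End InfiniteSaddleNode.

Lemma ord2_cases (i : 'I_2) : i = i0 \/ i = i1.
Proof. by case: i => [[|[|//]] ?]; [left | right]; apply/val_inj. Qed.

Section TwoByTwo.
Variable R : comNzRingType.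
Implicit Types (A : 'M[R]_2) (x : 'cV[R]_2).

Lemma sum_ord2 (F : 'I_2 -> R) : \sum_(i < 2) F i = F i0 + F i1.
Proof.
rewrite !big_ord_recl big_ord0 addr0.
by have -> : lift ord0 (ord0 : 'I_1) = i1 by apply/val_inj.
Qed.

Definition mx2 (a b c d : R) : 'M[R]_2 :=
  \matrix_(i, j) if i == i0 then (if j == i0 then a else b) else (if j == i0 then c else d).

Lemma mulmx_cV2 A x i : (A *m x) i 0 = A i i0 * x i0 0 + A i i1 * x i1 0.
Proof.
rewrite mxE !big_ord_recl big_ord0 addr0.
by have -> : lift ord0 (ord0 : 'I_1) = i1 by apply/val_inj.
Qed.

Lemma trmx_mulmx_cV2 A x j : (x^T *m A) 0 j = x i0 0 * A i0 j + x i1 0 * A i1 j.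
Proof.
rewrite mxE !big_ord_recl big_ord0 addr0 !mxE.
by have -> : lift ord0 (ord0 : 'I_1) = i1 by apply/val_inj.
Qed.

Lemma mulmx_cV2_eq0 A x : A *m x = 0 ->
  A i0 i0 * x i0 0 + A i0 i1 * x i1 0 = 0 /\ A i1 i0 * x i0 0 + A i1 i1 * x i1 0 = 0.
Proof. by move=> Ax0; split; rewrite -mulmx_cV2 Ax0 mxE. Qed.

Lemma trmx_mulmx_cV2_eq0 A x : x^T *m A = 0 ->
  x i0 0 * A i0 i0 + x i1 0 * A i1 i0 = 0 /\ x i0 0 * A i0 i1 + x i1 0 * A i1 i1 = 0.
Proof. by move=> xA0; split; rewrite -trmx_mulmx_cV2 xA0 mxE. Qed.

Lemma mxtrace_mx2 A : \tr A = A i0 i0 + A i1 i1.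
Proof.
rewrite /mxtrace !big_ord_recl big_ord0 addr0.
by have -> : lift ord0 (ord0 : 'I_1) = i1 by apply/val_inj.
Qed.

Lemma cV2_neq0 x : x != 0 -> (x i0 0 != 0) || (x i1 0 != 0).
Proof.
apply: contraNT; rewrite negb_or !negbK => /andP[/eqP x0 /eqP x1].
by apply/eqP/matrixP => i j; rewrite (ord1 j) mxE; case: (ord2_cases i) => ->.
Qed.

Lemma det_mx2 A : \det A = A i0 i0 * A i1 i1 - A i0 i1 * A i1 i0.
Proof.
rewrite (expand_det_row _ ord0) !big_ord_recl big_ord0 /cofactor /= !det_mx11 !mxE addr0.
have -> : lift ord0 (0 : 'I_1) = i1 by apply/val_inj.
have -> : lift i1 (0 : 'I_1) = i0 by apply/val_inj.
by rewrite expr0 mul1r expr1 mulN1r mulrN.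
Qed.

End TwoByTwo.

Definition mono2 (a b : nat) : 'X_{1..2} :=
  [multinom (if i == i0 then a else b) | i < 2].

Lemma mono2_i0 a b : mono2 a b i0 = a. Proof. by rewrite mnmE. Qed.
Lemma mono2_i1 a b : mono2 a b i1 = b. Proof. by rewrite mnmE. Qed.

Lemma mono2_eta (m : 'X_{1..2}) : m = mono2 (m i0) (m i1).
Proof. by apply/mnmP => i; case: (ord2_cases i) => ->; rewrite ?mono2_i0 ?mono2_i1. Qed.

Lemma eq_mono2 a b c d : (mono2 a b == mono2 c d) = (a == c) && (b == d).
Proof.
apply/eqP/andP => [e | [/eqP-> /eqP->] //].
by move: (congr1 (fun m : 'X_{1..2} => m i0) e) (congr1 (fun m : 'X_{1..2} => m i1) e);
  rewrite /= !mono2_i0 !mono2_i1 => -> ->.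
Qed.

Definition mono2_le2 : seq 'X_{1..2} :=
  [:: mono2 0 0; mono2 1 0; mono2 0 1; mono2 2 0; mono2 1 1; mono2 0 2].

Lemma uniq_mono2_le2 : uniq mono2_le2.
Proof. by rewrite /= !inE !eq_mono2. Qed.

Lemma mem_mono2_le2 (m : 'X_{1..2}) : (mdeg m < 3)%N -> m \in mono2_le2.
Proof.
rewrite mdegE !big_ord_recl big_ord0 addn0 (mono2_eta m).
have -> : lift ord0 (ord0 : 'I_1) = i1 by apply/val_inj.
rewrite !mono2_i0 !mono2_i1 /=.
by case: (m i0) => [|[|[|?]]]; case: (m i1) => [|[|[|?]]]; rewrite // !inE !eq_mono2.
Qed.

Lemma big_msupp_quad (R : nzRingType) (V : lmodType R) (s : seq 'X_{1..2})
    (g : 'X_{1..2} -> V) (p : {mpoly R[2]}) :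
  uniq s -> {subset mono2_le2 <= s} -> (msize p <= 3)%N ->
  \sum_(m <- msupp p) p@_m *: g m = \sum_(m <- s) p@_m *: g m.
Proof.
move=> s_uniq s_cover size_p.
have supp_sub : perm_eq (msupp p) [seq m <- s | m \in msupp p].
  apply: uniq_perm; rewrite ?msupp_uniq ?filter_uniq // => m.
  rewrite mem_filter; case: (boolP (m \in msupp p)) => //= supp_m.
  by rewrite s_cover // mem_mono2_le2 // (leq_trans (msize_mdeg_lt supp_m) size_p).
rewrite (perm_big _ supp_sub) big_filter big_rmcond //= => m.
by move/memN_msupp_eq0 ->; rewrite scale0r.
Qed.

Definition coef2 (R : nzRingType) (p : {mpoly R[2]}) (a b : nat) : R := p@_(mono2 a b).

(* Otherwise [ring] treats [p@_m] as an additive map applied to [p] and gets very slow. *)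
Ltac generalize_coef2 :=
  repeat match goal with |- context [coef2 ?p ?a ?b] => move: (coef2 p a b) => ? end.

Section QuadraticPolynomials.
Variable R : idomainType.
Implicit Types p : {mpoly R[2]}.
Local Notation X0 := ('X_i0 : {mpoly R[2]}).
Local Notation X1 := ('X_i1 : {mpoly R[2]}).

Definition qpoly (c00 c10 c01 c20 c11 c02 : R) : {mpoly R[2]} :=
  c00 *: 1 + c10 *: X0 + c01 *: X1 + c20 *: (X0 * X0) + c11 *: (X0 * X1) + c02 *: (X1 * X1).

Lemma mpolyX_mono2 a b : 'X_[mono2 a b] = X0 ^+ a * X1 ^+ b :> {mpoly R[2]}.
Proof.
rewrite mpolyXE_id !big_ord_recl big_ord0 mulr1.
have -> : lift ord0 (ord0 : 'I_1) = i1 by apply/val_inj.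
by rewrite -/i0 mono2_i0 mono2_i1.
Qed.

Lemma mderivXU (i j : 'I_2) : ('X_i : {mpoly R[2]})^`M(j) = ((i == j)%:R : R) *: 1.
Proof.
rewrite mderivX mnm1E; case: eqP => [->|_]; last by rewrite !scale0r.
have -> : (U_(j) - U_(j) = 0)%MM by apply/mnmP => k; rewrite mnmBE mnm0E subnn.
by rewrite mpolyX0.
Qed.

Lemma mderiv1 (j : 'I_2) : (1 : {mpoly R[2]})^`M(j) = 0.
Proof. by rewrite -mpolyC1 mderivC. Qed.

Lemma meval_qpoly c00 c10 c01 c20 c11 c02 (x : 'I_2 -> R) :
  (qpoly c00 c10 c01 c20 c11 c02).@[x] =
  c00 + c10 * x i0 + c01 * x i1 + qform c20 c11 c02 (x i0) (x i1).
Proof. by rewrite /qpoly !mevalD !mevalZ !mevalM !mevalXU meval1 /qform; ring. Qed.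

Lemma mderiv_qpoly_i0 c00 c10 c01 c20 c11 c02 :
  (qpoly c00 c10 c01 c20 c11 c02)^`M(i0) = qpoly c10 (2 * c20) c11 0 0 0.
Proof.
by rewrite /qpoly !(mderivD, mderivZ, mderivM, mderivXU, mderiv1) /= -!mul_mpolyC; ring.
Qed.

Lemma mderiv_qpoly_i1 c00 c10 c01 c20 c11 c02 :
  (qpoly c00 c10 c01 c20 c11 c02)^`M(i1) = qpoly c01 c11 (2 * c02) 0 0 0.
Proof.
by rewrite /qpoly !(mderivD, mderivZ, mderivM, mderivXU, mderiv1) /= -!mul_mpolyC; ring.
Qed.

Lemma qpolyE p : (msize p <= 3)%N ->
  p = qpoly (coef2 p 0 0) (coef2 p 1 0) (coef2 p 0 1) (coef2 p 2 0) (coef2 p 1 1) (coef2 p 0 2).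
Proof.
move=> hp; rewrite {1}(mpolyE p) (big_msupp_quad _ uniq_mono2_le2) //.
by rewrite /mono2_le2 !big_cons big_nil !mpolyX_mono2 /qpoly /coef2 !expr0 !expr1 !expr2
  !mulr1 !mul1r !addrA addr0.
Qed.

End QuadraticPolynomials.

Section EvaluationQuadratic.
Variable R : realFieldType.
Implicit Types (p : {mpoly R[2]}) (x : 'cV[R]_2).

Definition qpart p (x y : R) : R := qform (coef2 p 2 0) (coef2 p 1 1) (coef2 p 0 2) x y.

Lemma homU1_qpoly p : (msize p <= 3)%N ->
  homU1 p =
  qpoly (coef2 p 2 0) (coef2 p 1 1) (coef2 p 1 0) (coef2 p 0 2) (coef2 p 0 1) (coef2 p 0 0).
Proof.
move=> hp; rewrite /homU1
  (@big_msupp_quad _ _ [:: mono2 2 0; mono2 1 1; mono2 1 0; mono2 0 2; mono2 0 1; mono2 0 0]) //.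
- by rewrite !big_cons big_nil !mono2_i0 !mono2_i1 /qpoly /coef2 !expr0 !expr1 !expr2
    !mulr1 !mul1r !addrA addr0.
- by rewrite /= !inE !eq_mono2.
- by apply/allP; rewrite /= !inE !eq_mono2.
Qed.

Lemma homU2_qpoly p : (msize p <= 3)%N ->
  homU2 p =
  qpoly (coef2 p 0 2) (coef2 p 1 1) (coef2 p 0 1) (coef2 p 2 0) (coef2 p 1 0) (coef2 p 0 0).
Proof.
move=> hp; rewrite /homU2
  (@big_msupp_quad _ _ [:: mono2 0 2; mono2 1 1; mono2 0 1; mono2 2 0; mono2 1 0; mono2 0 0]) //.
- by rewrite !big_cons big_nil !mono2_i0 !mono2_i1 /qpoly /coef2 !expr0 !expr1 !expr2
    !mulr1 !mul1r !addrA addr0.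
- by rewrite /= !inE !eq_mono2.
- by apply/allP; rewrite /= !inE !eq_mono2.
Qed.

Lemma hessian_qpoly c00 c10 c01 c20 c11 c02 x (v : 'cV[R]_2) :
  \sum_(j < 2) \sum_(k < 2) evp (((qpoly c00 c10 c01 c20 c11 c02)^`M(j))^`M(k)) x
    * v j 0 * v k 0 = 2 * qform c20 c11 c02 (v i0 0) (v i1 0).
Proof.
by rewrite !sum_ord2 !(mderiv_qpoly_i0, mderiv_qpoly_i1) /evp !meval_qpoly /qform; ring.
Qed.

Lemma evp_quad p x : (msize p <= 3)%N ->
  evp p x =
  coef2 p 0 0 + coef2 p 1 0 * x i0 0 + coef2 p 0 1 * x i1 0 + qpart p (x i0 0) (x i1 0).
Proof. by move=> hp; rewrite /evp {1}(qpolyE hp) meval_qpoly. Qed.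

Lemma evp_mderiv_i0 p x : (msize p <= 3)%N ->
  evp (p^`M(i0)) x = coef2 p 1 0 + 2 * coef2 p 2 0 * x i0 0 + coef2 p 1 1 * x i1 0.
Proof.
by move=> hp; rewrite /evp {1}(qpolyE hp) mderiv_qpoly_i0 meval_qpoly /qform;
  generalize_coef2; ring.
Qed.

Lemma evp_mderiv_i1 p x : (msize p <= 3)%N ->
  evp (p^`M(i1)) x = coef2 p 0 1 + coef2 p 1 1 * x i0 0 + 2 * coef2 p 0 2 * x i1 0.
Proof.
by move=> hp; rewrite /evp {1}(qpolyE hp) mderiv_qpoly_i1 meval_qpoly /qform;
  generalize_coef2; ring.
Qed.

Lemma evp_taylor p r x : (msize p <= 3)%N ->
  evp p x = evp p r + evp (p^`M(i0)) r * (x i0 0 - r i0 0)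
    + evp (p^`M(i1)) r * (x i1 0 - r i1 0) + qpart p (x i0 0 - r i0 0) (x i1 0 - r i1 0).
Proof.
by move=> hp; rewrite evp_mderiv_i0 // evp_mderiv_i1 // !(evp_quad _ hp) /qpart /qform;
  generalize_coef2; ring.
Qed.

Lemma hessian_quad p x (v : 'cV[R]_2) : (msize p <= 3)%N ->
  \sum_(j < 2) \sum_(k < 2) evp ((p^`M(j))^`M(k)) x * v j 0 * v k 0 =
  2 * qpart p (v i0 0) (v i1 0).
Proof. by move=> hp; rewrite [in LHS](qpolyE hp) hessian_qpoly. Qed.

End EvaluationQuadratic.

Section Charts.
Variables (R : realFieldType) (P Q : {mpoly R[2]}).
Hypotheses (size_P : (msize P <= 3)%N) (size_Q : (msize Q <= 3)%N).

Ltac eval_chart :=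
  rewrite ?(mderivB, mderivN, mderivM, mderivXU, mderiv_qpoly_i0, mderiv_qpoly_i1) /evp
    !(mevalD, mevalB, mevalN, mevalM, mevalZ, mevalXU, meval1, meval_qpoly) !mxE /=
    /qpart /qform;
  generalize_coef2; ring.

Lemma evp_chartU1 u :
  evp (chartU1 P Q i0) (pt2 u 0) = qpart Q 1 u - u * qpart P 1 u.
Proof. by rewrite /chartU1 /mkvf /= !homU1_qpoly //; eval_chart. Qed.

Lemma det_jac_chartU1 u :
  \det (jac (chartU1 P Q) (pt2 u 0)) =
  (coef2 Q 1 1 + 2 * coef2 Q 0 2 * u - qpart P 1 u - u * (coef2 P 1 1 + 2 * coef2 P 0 2 * u))
  * - qpart P 1 u.
Proof. by rewrite det_mx2 !mxE /chartU1 /mkvf /= !homU1_qpoly //; eval_chart. Qed.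

Lemma evp_chartU2 : evp (chartU2 P Q i0) (pt2 0 0) = qpart P 0 1.
Proof. by rewrite /chartU2 /mkvf /= !homU2_qpoly //; eval_chart. Qed.

Lemma det_jac_chartU2 :
  \det (jac (chartU2 P Q) (pt2 0 0)) = (coef2 P 1 1 - coef2 Q 0 2) * - qpart Q 0 1.
Proof. by rewrite det_mx2 !mxE /chartU2 /mkvf /= !homU2_qpoly //; eval_chart. Qed.

End Charts.

Section QuadraticSystem.
Variables (R : realFieldType) (P Q : {mpoly R[2]}).
Hypotheses (size_P : (msize P <= 3)%N) (size_Q : (msize Q <= 3)%N).
Implicit Types (r v w x : 'cV[R]_2).
Local Notation F := (mkvf P Q).

Lemma singular_pointP (G : vfield R) x :
  singular_point G x -> evp (G i0) x = 0 /\ evp (G i1) x = 0.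
Proof.
move=> sing; have comp i : evp (G i) x = 0.
  by transitivity (evf G x i 0); [rewrite mxE | rewrite sing mxE].
by split; apply: comp.
Qed.

Lemma second_order_term_quad r w v :
  second_order_term F r w v =
  2 * (w i0 0 * qpart P (v i0 0) (v i1 0) + w i1 0 * qpart Q (v i0 0) (v i1 0)).
Proof. by rewrite /second_order_term sum_ord2 /mkvf /= !hessian_quad //; ring. Qed.

Lemma infinite_saddle_node_conditions v w :
  v != 0 ->
  infinite_saddle_node_02 (infinite_point_in_direction P Q v).1
                          (infinite_point_in_direction P Q v).2 ->
  w i0 0 * qpart P (v i0 0) (v i1 0) + w i1 0 * qpart Q (v i0 0) (v i1 0) != 0 ->
  v i0 0 * qpart Q (v i0 0) (v i1 0) - v i1 0 * qpart P (v i0 0) (v i1 0) = 0 /\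
  v i0 0 * qpolar (coef2 Q 2 0) (coef2 Q 1 1) (coef2 Q 0 2) (v i0 0) (v i1 0) (- w i1 0) (w i0 0)
  - v i1 0 * qpolar (coef2 P 2 0) (coef2 P 1 1) (coef2 P 0 2) (v i0 0) (v i1 0) (- w i1 0) (w i0 0)
  = w i0 0 * qpart P (v i0 0) (v i1 0) + w i1 0 * qpart Q (v i0 0) (v i1 0).
Proof.
move=> v_neq0 [_ [[[/singular_pointP[sing _] [det _]] _] _]].
rewrite /infinite_point_in_direction in sing det.
case: (eqVneq (v i0 0) 0) => [v0_0 | v0_neq0].
  rewrite v0_0 eqxx /= evp_chartU2 // in sing.
  rewrite v0_0 eqxx /= det_jac_chartU2 // in det.
  have v1_neq0 : v i1 0 != 0 by move: (cV2_neq0 v_neq0); rewrite v0_0 eqxx.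
  exact: infinite_conditions_U2.
rewrite v0_neq0 /= evp_chartU1 // in sing; rewrite v0_neq0 /= det_jac_chartU1 // in det.
exact: infinite_conditions_U1.
Qed.

Lemma evp_normal_form_i0 h k n x :
  evp (normal_form h k n i0) x = qform 1 (2 * h) k (x i0 0) (x i1 0).
Proof.
by rewrite /normal_form /mkvf /= /evp !(mevalD, mevalZ, mevalM, mevalXU) /qform; ring.
Qed.

Lemma evp_normal_form_i1 h k n x :
  evp (normal_form h k n i1) x = x i1 0 + qform 0 1 n (x i0 0) (x i1 0).
Proof.
by rewrite /normal_form /mkvf /= /evp !(mevalD, mevalZ, mevalM, mevalXU) /qform; ring.
Qed.

Lemma affine_normal_form r (a11 a12 a21 a22 c h k n : R) :
  singular_point F r ->
  (forall y0 y1 : R,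
    c * (a11 * (jac F r i0 i0 * y0 + jac F r i0 i1 * y1 + qpart P y0 y1)
       + a12 * (jac F r i1 i0 * y0 + jac F r i1 i1 * y1 + qpart Q y0 y1)) =
      qform 1 (2 * h) k (a11 * y0 + a12 * y1) (a21 * y0 + a22 * y1) /\
    c * (a21 * (jac F r i0 i0 * y0 + jac F r i0 i1 * y1 + qpart P y0 y1)
       + a22 * (jac F r i1 i0 * y0 + jac F r i1 i1 * y1 + qpart Q y0 y1)) =
      (a21 * y0 + a22 * y1) + qform 0 1 n (a11 * y0 + a12 * y1) (a21 * y0 + a22 * y1)) ->
  forall x, c *: (mx2 a11 a12 a21 a22 *m evf F x) =
            evf (normal_form h k n) (mx2 a11 a12 a21 a22 *m x + - (mx2 a11 a12 a21 a22 *m r)).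
Proof.
move=> /singular_pointP[P_r Q_r] germ x; apply/matrixP => i j; rewrite (ord1 j).
have [E0 E1] := germ (x i0 0 - r i0 0) (x i1 0 - r i1 0).
have evpF l : evp (F l) x =
    jac F r l i0 * (x i0 0 - r i0 0) + jac F r l i1 * (x i1 0 - r i1 0)
    + qpart (F l) (x i0 0 - r i0 0) (x i1 0 - r i1 0).
  by rewrite !mxE; case: (ord2_cases l) => -> /=; rewrite (evp_taylor r) ?P_r ?Q_r ?add0r.
case: (ord2_cases i) => ->; rewrite [LHS]mxE [RHS]mxE
  ?evp_normal_form_i0 ?evp_normal_form_i1 !mxE !sum_ord2 !mxE /= !evpF /mkvf /=.
- by rewrite E0 /qform; ring.
- by rewrite E1 /qform; ring.
Qed.

End QuadraticSystem.

Theorem proposition2p2 (R : realFieldType) (P Q : {mpoly R[2]}) :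
  quadratic_system P Q ->
  (exists r v : 'cV[R]_2,
     finite_double_saddle_node (mkvf P Q) r /\
     null_eigvec (mkvf P Q) r v /\
     infinite_saddle_node_02 (infinite_point_in_direction P Q v).1
                             (infinite_point_in_direction P Q v).2) ->
  exists (A : 'M[R]_2) (b : 'cV[R]_2) (c h k n : R),
    A \in unitmx /\ c != 0 /\
    forall x : 'cV[R]_2,
      c *: (A *m evf (mkvf P Q) x) = evf (normal_form h k n) (A *m x + b).
Proof.
move=> hq [r [v [[[sing [_ tr_neq0]] [v' [w [[v'_neq0 Jv'] [w_neq0 [wJ sec]]]]]]
  [[v_neq0 Jv] inf]]]].
have [size_P size_Q] : (msize P <= 3)%N /\ (msize Q <= 3)%N by rewrite -hq leq_maxl leq_maxr.
have [Jv0 Jv1] := mulmx_cV2_eq0 Jv.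
have [Jv'0 Jv'1] := mulmx_cV2_eq0 Jv'.
have [wJ0 wJ1] := trmx_mulmx_cV2_eq0 wJ.
rewrite mxtrace_mx2 in tr_neq0.
have mu_neq0 : w i0 0 * qpart P (v i0 0) (v i1 0) + w i1 0 * qpart Q (v i0 0) (v i1 0) != 0.
  apply: contra_neq sec => /eqP; rewrite qform_lincomb => /eqP mu0.
  rewrite second_order_term_quad // qform_lincomb (qform_eq0_parallel _ _ mu0) ?mulr0 //.
    exact: cV2_neq0.
  exact: right_kernel_parallel tr_neq0 Jv0 Jv1 Jv'0 Jv'1.
have [inf_sing inf_det] := infinite_saddle_node_conditions size_P size_Q v_neq0 inf mu_neq0.
have [a11 [a12 [a21 [a22 [c [h [k [n [detA [c_neq0 germ]]]]]]]]]] :=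
  quadratic_germ_normal_form tr_neq0 (cV2_neq0 v_neq0) Jv0 Jv1 (cV2_neq0 w_neq0) wJ0 wJ1
    mu_neq0 inf_sing inf_det.
exists (mx2 a11 a12 a21 a22), (- (mx2 a11 a12 a21 a22 *m r)), c, h, k, n.
split; first by rewrite unitmxE unitfE det_mx2 !mxE.
by split=> //; apply: affine_normal_form.
Qed.
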